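(* Let $G$ be a finitely generated group which is virtually $\mathbb{Z}$, i.e. $G$ has a subgroup of finite index isomorphic to $\mathbb{Z}$. Let $A$ be a finite alphabet and let $\Phi:A^G\to A^G$ be a cellular automaton on $G$. Then $\Phi$ is sensitive to initial conditions if and only if $\Phi$ has no equicontinuity point.
   Context: Let $E$ be a finite generating set of $G$ closed under inverses, $d_E$ the associated word metric on $G$, and $B_G(g,k)$ the closed ball of radius $k$ in $d_E$. Configurations are elements of $A^G$; $G$ acts on them by $(gx)(h)=x(g^{-1}h)$. The Cantor metric on $A^G$ is $d^E(x,y)=2^{-k}$ where $k=\min\{d_E(1_G,g): x(g)\neq y(g)\}$ (and $d^E(x,x)=0$); $B^E(x,r)$ denotes the closed ball in this metric. A cellular automaton (CA) on $G$ with alphabet $A$ is a map $\Phi:A^G\to A^G$ for which there are a finite set $S\subseteq G$ and a map $\mu:A^S\to A$ with $\Phi(x)(g)=\mu((g^{-1}x)|_S)$ for all $x,g$, i.e. $\Phi(x)(g)=\mu(s\mapsto x(gs))$. A configuration $x$ is an equicontinuity point of $\Phi$ if for every $\epsilon>0$ there is $\delta>0$ such that for all $t\in\mathbb{N}$, $\Phi^t(B^E(x,\delta))\subseteq B^E(\Phi^t(x),\epsilon)$. $\Phi$ is sensitive to initial conditions if there is $\epsilon>0$ such that for every $x\in A^G$ and every $\delta>0$ there exist $t\in\mathbb{N}$ and $y\in B^E(x,\delta)$ with $\Phi^t(y)\notin B^E(\Phi^t(x),\epsilon)$. (These notions do not depend on the choice of the finite generating set $E$.) *)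

From Stdlib Require Import Reals ZArith List ClassicalEpsilon.
Open Scope R_scope.

Section Defs.
Variables (G : Type) (mul : G -> G -> G) (one : G) (inv : G -> G).

Definition is_group : Prop :=
  (forall a b c, mul a (mul b c) = mul (mul a b) c) /\
  (forall a, mul one a = a) /\ (forall a, mul a one = a) /\
  (forall a, mul (inv a) a = one) /\ (forall a, mul a (inv a) = one).

Definition word_prod (w : list G) : G := fold_right mul one w.

Definition gen_set_closed_inv (E : list G) : Prop :=
  (forall e, In e E -> In (inv e) E) /\
  (forall g, exists w, (forall s, In s w -> In s E) /\ word_prod w = g).

Definition is_word_length (E : list G) (g : G) (n : nat) : Prop :=
  (exists w, (forall s, In s w -> In s E) /\ word_prod w = g /\ length w = n) /\
  (forall w, (forall s, In s w -> In s E) -> word_prod w = g -> (n <= length w)%nat).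

Definition word_length (E : list G) (g : G) : nat :=
  epsilon (inhabits 0%nat) (fun n => is_word_length E g n).

Definition is_subgroup (H : G -> Prop) : Prop :=
  H one /\ (forall a b, H a -> H b -> H (mul a b)) /\ (forall a, H a -> H (inv a)).

Definition finite_index (H : G -> Prop) : Prop :=
  exists reps : list G, forall g, exists r h, In r reps /\ H h /\ g = mul r h.

Definition isomorphic_to_Z (H : G -> Prop) : Prop :=
  exists phi : Z -> G,
    (forall a b, phi (a + b)%Z = mul (phi a) (phi b)) /\
    (forall a b, phi a = phi b -> a = b) /\
    (forall g, H g <-> exists a, phi a = g).

Definition virtually_Z : Prop :=
  exists H : G -> Prop, is_subgroup H /\ finite_index H /\ isomorphic_to_Z H.

Variable A : Type.

Definition finite_type (T : Type) : Prop := exists l : list T, forall a, In a l.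

Definition cantor_dist (E : list G) (x y : G -> A) : R :=
  match excluded_middle_informative (x = y) with
  | left _ => 0
  | right _ =>
      (/ 2) ^ (epsilon (inhabits 0%nat) (fun k =>
         (exists g, x g <> y g /\ word_length E g = k) /\
         (forall g, x g <> y g -> (k <= word_length E g)%nat)))
  end.

Definition cantor_ball (E : list G) (x : G -> A) (r : R) : (G -> A) -> Prop :=
  fun y => cantor_dist E x y <= r.

Definition is_CA (Phi : (G -> A) -> (G -> A)) : Prop :=
  exists (S : list G) (mu : ({s : G | In s S} -> A) -> A),
    forall x g, Phi x g = mu (fun s => x (mul g (proj1_sig s))).

Definition equicontinuity_point (E : list G) (Phi : (G -> A) -> (G -> A)) (x : G -> A) : Prop :=
  forall eps, eps > 0 -> exists delta, delta > 0 /\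
    forall (t : nat) y, cantor_ball E x delta y ->
      cantor_ball E (Nat.iter t Phi x) eps (Nat.iter t Phi y).

Definition sensitive (E : list G) (Phi : (G -> A) -> (G -> A)) : Prop :=
  exists eps, eps > 0 /\ forall x delta, delta > 0 ->
    exists (t : nat) y, cantor_ball E x delta y /\
      ~ cantor_ball E (Nat.iter t Phi x) eps (Nat.iter t Phi y).

End Defs.

From Stdlib Require Import Reals ZArith List Lia Lra.
From Stdlib Require Import Classical ClassicalEpsilon FunctionalExtensionality PropExtensionality.
Open Scope R_scope.

(* Sensitivity trivially rules out equicontinuity points.  Conversely, if Phi is
   not sensitive then for every radius K there is a blocking configuration: some
   x0 and n0 such that every y agreeing with x0 on the n0-ball keeps agreeing with
   it on the K-ball at all times.  A virtually cyclic group carries a height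
   L : G -> Z which is equivariant under the infinite cyclic subgroup, coarsely
   Lipschitz for right multiplication by generators and by the memory set, and
   proper.  Taking K so large that the K-ball contains a slab of height-width D,
   the reach of the memory set in height, and repeating the blocking pattern
   periodically along the cyclic subgroup, the copies of the slab act as walls
   that no information crosses; hence a perturbation of the periodic configuration
   far away never reaches the region between two walls, which makes it an
   equicontinuity point. *)

Lemma classical_least_nat (P : nat -> Prop) (n : nat) :
  P n -> exists m, P m /\ forall k, P k -> (m <= k)%nat.
Proof.
  intros Pn.
  destruct (dec_inh_nat_subset_has_unique_least_element P (fun k => classic (P k))
              (ex_intro _ n Pn)) as (m & Hm & _).
  exists m; exact Hm.
Qed.

Lemma list_abs_bound {T : Type} (f : T -> Z) (l : list T) :
  exists D, (0 <= D)%Z /\ forall x, In x l -> (Z.abs (f x) <= D)%Z.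
Proof.
  induction l as [|a l (D & HD & Hl)].
  - exists 0%Z. split; [lia | intros x []].
  - exists (Z.max D (Z.abs (f a))). split; [lia|].
    intros x [<- | Hx]; [lia | specialize (Hl x Hx); lia].
Qed.

Lemma pow_half_lt (k m : nat) : (k < m)%nat -> (/ 2) ^ m < (/ 2) ^ k.
Proof.
  intros Hkm. rewrite !pow_inv. apply Rinv_lt_contravar.
  - apply Rmult_lt_0_compat; apply pow_lt; lra.
  - apply Rlt_pow; [lra | exact Hkm].
Qed.

Lemma pow_half_le (k m : nat) : (k <= m)%nat -> (/ 2) ^ m <= (/ 2) ^ k.
Proof.
  intros Hkm. rewrite !pow_inv. apply Rinv_le_contravar.
  - apply pow_lt; lra.
  - apply Rle_pow; [lra | exact Hkm].
Qed.

Lemma pow_half_small (eps : R) : 0 < eps -> exists K, (/ 2) ^ S K <= eps.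
Proof.
  intros Heps.
  destruct (pow_lt_1_zero (/ 2) ltac:(rewrite Rabs_pos_eq; lra) eps Heps) as [K HK].
  exists K. specialize (HK (S K) ltac:(lia)).
  rewrite Rabs_pos_eq in HK by (apply pow_le; lra). lra.
Qed.

Section Group.
Variables (G : Type) (mul : G -> G -> G) (one : G) (inv : G -> G).
Hypothesis HG : is_group G mul one inv.

Let mulgA : forall a b c, mul a (mul b c) = mul (mul a b) c := proj1 HG.
Let mul1g : forall a, mul one a = a := proj1 (proj2 HG).
Let mulg1 : forall a, mul a one = a := proj1 (proj2 (proj2 HG)).
Let mulVg : forall a, mul (inv a) a = one := proj1 (proj2 (proj2 (proj2 HG))).
Let mulgV : forall a, mul a (inv a) = one := proj2 (proj2 (proj2 (proj2 HG))).

Lemma mulg_cancel_r (a b c : G) : mul a c = mul b c -> a = b.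
Proof.
  intros Habc. rewrite <- (mulg1 a), <- (mulg1 b), <- (mulgV c), !mulgA, Habc.
  reflexivity.
Qed.

Lemma inv_unique (a b : G) : mul a b = one -> b = inv a.
Proof.
  intros Hab. rewrite <- (mul1g b), <- (mulVg a), <- mulgA, Hab, mulg1. reflexivity.
Qed.

Lemma inv_involutive (a : G) : inv (inv a) = a.
Proof. symmetry. apply inv_unique, mulVg. Qed.

Lemma inv_mul (a b : G) : inv (mul a b) = mul (inv b) (inv a).
Proof.
  symmetry. apply inv_unique.
  rewrite mulgA, <- (mulgA a), mulgV, mulg1, mulgV. reflexivity.
Qed.

Lemma virtually_Z_right_cosets :
  virtually_Z G mul one inv ->
  exists (phi : Z -> G) (reps : list G),
    (forall a b, phi (a + b)%Z = mul (phi a) (phi b)) /\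
    (forall a b, phi a = phi b -> a = b) /\
    (forall g, exists r m, In r reps /\ g = mul (phi m) r).
Proof.
  intros (H & (_ & _ & H_inv) & (reps & reps_cover) & (phi & phi_add & phi_inj & phi_onto)).
  exists phi, (map inv reps). split; [exact phi_add | split; [exact phi_inj |]].
  intros g. destruct (reps_cover (inv g)) as (r & h & Hr & Hh & Hg).
  destruct (proj1 (phi_onto (inv h)) (H_inv h Hh)) as [m Hm].
  exists (inv r), m. split; [now apply in_map |].
  rewrite Hm, <- inv_mul, <- Hg, inv_involutive. reflexivity.
Qed.

Section Words.
Variable E : list G.
Hypothesis HE : gen_set_closed_inv G mul one inv E.
Local Notation wl := (word_length G mul one E).

Lemma word_prod_app (w1 w2 : list G) :
  word_prod G mul one (w1 ++ w2) = mul (word_prod G mul one w1) (word_prod G mul one w2).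
Proof.
  induction w1 as [|s w1 IH]; simpl; [now rewrite mul1g |].
  unfold word_prod in *. simpl. rewrite IH. apply mulgA.
Qed.

Lemma word_length_spec (g : G) : is_word_length G mul one E g (wl g).
Proof.
  unfold word_length. apply epsilon_spec.
  destruct (proj2 HE g) as (w & Hw & Hwg).
  destruct (classical_least_nat
              (fun n => exists w, (forall s, In s w -> In s E) /\
                                  word_prod G mul one w = g /\ length w = n)
              (length w) (ex_intro _ w (conj Hw (conj Hwg eq_refl))))
    as (m & Hm & Hmin).
  exists m. split; [exact Hm |]. intros w' Hw' Hw'g. apply Hmin. eauto.
Qed.

Lemma word_length_minimal (g : G) (w : list G) :
  (forall s, In s w -> In s E) -> word_prod G mul one w = g -> (wl g <= length w)%nat.
Proof. apply (word_length_spec g). Qed.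

Lemma word_length_one : wl one = 0%nat.
Proof.
  apply Nat.le_0_r, (word_length_minimal one nil); [intros s [] | reflexivity].
Qed.

Lemma word_length_mul (g h : G) : (wl (mul g h) <= wl g + wl h)%nat.
Proof.
  destruct (word_length_spec g) as [(w1 & Hw1 & Hg & Hl1) _].
  destruct (word_length_spec h) as [(w2 & Hw2 & Hh & Hl2) _].
  rewrite <- Hl1, <- Hl2, <- length_app. apply word_length_minimal.
  - intros s Hs. apply in_app_or in Hs. destruct Hs; auto.
  - rewrite word_prod_app. congruence.
Qed.

Lemma word_lipschitz (f : G -> Z) (D : Z) :
  (forall g s, In s E -> (Z.abs (f (mul g s) - f g) <= D)%Z) ->
  forall g, (Z.abs (f g - f one) <= D * Z.of_nat (wl g))%Z.
Proof.
  intros Hf g.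
  destruct (word_length_spec g) as [(w & Hw & <- & <-) _].
  induction w as [|s w IH] using rev_ind; [simpl; lia |].
  rewrite word_prod_app, length_app. cbn [word_prod fold_right length]. rewrite mulg1.
  assert (Hs : In s E) by (apply Hw, in_or_app; right; left; reflexivity).
  assert (IH' : (Z.abs (f (word_prod G mul one w) - f one) <= D * Z.of_nat (length w))%Z)
    by (apply IH; intros s' Hs'; apply Hw, in_or_app; left; exact Hs').
  specialize (Hf (word_prod G mul one w) s Hs). lia.
Qed.

Section Height.
Variable phi : Z -> G.
Hypothesis phi_add : forall a b, phi (a + b)%Z = mul (phi a) (phi b).
Hypothesis phi_inj : forall a b, phi a = phi b -> a = b.
Variable reps : list G.
Hypothesis reps_cover : forall g, exists r m, In r reps /\ g = mul (phi m) r.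

Lemma phi_zero : phi 0%Z = one.
Proof.
  apply (mulg_cancel_r _ _ (phi 0%Z)). rewrite <- phi_add, mul1g. reflexivity.
Qed.

Lemma phi_opp_cancel (p : Z) (g : G) : mul (phi (- p)) (mul (phi p) g) = g.
Proof. rewrite mulgA, <- phi_add, Z.add_opp_diag_l, phi_zero. apply mul1g. Qed.

Definition coset_rep (g : G) : G :=
  epsilon (inhabits one) (fun r => In r reps /\ exists m, g = mul (phi m) r).

Lemma coset_rep_spec (g : G) : In (coset_rep g) reps /\ exists m, g = mul (phi m) (coset_rep g).
Proof.
  unfold coset_rep. apply epsilon_spec.
  destruct (reps_cover g) as (r & m & Hr & Hg). eauto.
Qed.

Lemma coset_rep_shift (p : Z) (g : G) : coset_rep (mul (phi p) g) = coset_rep g.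
Proof.
  unfold coset_rep. f_equal. apply functional_extensionality. intros r.
  apply propositional_extensionality.
  split; intros [Hr [m Hm]]; split; auto.
  - exists (- p + m)%Z. rewrite phi_add, <- mulgA, <- Hm. symmetry. apply phi_opp_cancel.
  - exists (p + m)%Z. rewrite phi_add, <- mulgA, <- Hm. reflexivity.
Qed.

Definition height (g : G) : Z :=
  epsilon (inhabits 0%Z) (fun m => g = mul (phi m) (coset_rep g)).

Lemma height_spec (g : G) : g = mul (phi (height g)) (coset_rep g).
Proof. unfold height. apply epsilon_spec, coset_rep_spec. Qed.

Lemma height_unique (g : G) (m : Z) : g = mul (phi m) (coset_rep g) -> height g = m.
Proof.
  intros Hm. apply phi_inj, (mulg_cancel_r _ _ (coset_rep g)).
  rewrite <- height_spec. exact Hm.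
Qed.

Lemma height_shift (p : Z) (g : G) : height (mul (phi p) g) = (p + height g)%Z.
Proof.
  apply height_unique.
  rewrite coset_rep_shift, phi_add, <- mulgA, <- height_spec. reflexivity.
Qed.

Lemma height_mul (g s : G) : height (mul g s) = (height g + height (mul (coset_rep g) s))%Z.
Proof. rewrite (height_spec g) at 1. rewrite <- mulgA, height_shift. reflexivity. Qed.

Lemma height_lipschitz (F : list G) :
  exists D, (0 <= D)%Z /\
    forall g s, In s F -> (Z.abs (height (mul g s) - height g) <= D)%Z.
Proof.
  destruct (list_abs_bound (fun rs => height (mul (fst rs) (snd rs))) (list_prod reps F))
    as (D & HD & Hbound).
  exists D. split; [exact HD |]. intros g s Hs.
  specialize (Hbound (coset_rep g, s) (in_prod _ _ _ _ (proj1 (coset_rep_spec g)) Hs)).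
  rewrite height_mul. simpl in Hbound. lia.
Qed.

Lemma word_length_phi_mul (e : Z) (n : nat) : (wl (phi (Z.of_nat n * e)) <= n * wl (phi e))%nat.
Proof.
  induction n as [|n IH].
  - rewrite Z.mul_0_l, phi_zero, word_length_one. reflexivity.
  - rewrite Nat2Z.inj_succ, Z.mul_succ_l, phi_add.
    pose proof (word_length_mul (phi (Z.of_nat n * e)) (phi e)). lia.
Qed.

Lemma height_proper (B : Z) :
  exists N, forall g, (Z.abs (height g) <= B)%Z -> (wl g <= N)%nat.
Proof.
  destruct (list_abs_bound (fun r => Z.of_nat (wl r)) reps) as (R & _ & HR).
  set (C := (wl (phi 1%Z) + wl (phi (-1)%Z))%nat).
  assert (Hphi : forall m, (wl (phi m) <= Z.to_nat (Z.abs m) * C)%nat).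
  { intros m. destruct (Z_le_gt_dec 0 m).
    - pose proof (word_length_phi_mul 1 (Z.to_nat m)) as Hm.
      rewrite Z2Nat.id, Z.mul_1_r in Hm by lia. unfold C. rewrite Z.abs_eq by lia. nia.
    - pose proof (word_length_phi_mul (-1) (Z.to_nat (- m))) as Hm.
      rewrite Z2Nat.id in Hm by lia. replace (- m * -1)%Z with m in Hm by lia.
      unfold C. rewrite Z.abs_neq by lia. nia. }
  exists (Z.to_nat (B * Z.of_nat C + R)). intros g Hg.
  pose proof (word_length_mul (phi (height g)) (coset_rep g)) as Hmul.
  rewrite <- height_spec in Hmul.
  pose proof (Hphi (height g)). specialize (HR _ (proj1 (coset_rep_spec g))). simpl in HR.
  nia.
Qed.

End Height.

Lemma virtually_Z_height :
  virtually_Z G mul one inv ->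
  exists (phi : Z -> G) (L : G -> Z),
    (forall p g, mul (phi (- p)%Z) (mul (phi p) g) = g) /\
    (forall p g, L (mul (phi p) g) = (p + L g)%Z) /\
    (forall F : list G, exists D, (0 <= D)%Z /\
       forall g s, In s F -> (Z.abs (L (mul g s) - L g) <= D)%Z) /\
    (forall B, exists N, forall g, (Z.abs (L g) <= B)%Z -> (wl g <= N)%nat).
Proof.
  intros HvZ.
  destruct (virtually_Z_right_cosets HvZ) as (phi & reps & phi_add & phi_inj & reps_cover).
  exists phi, (height phi reps). repeat split.
  - exact (phi_opp_cancel phi phi_add).
  - now apply height_shift.
  - now apply height_lipschitz.
  - now apply height_proper.
Qed.

End Words.
End Group.

Section CantorMetric.
Variables (G : Type) (mul : G -> G -> G) (one : G) (A : Type) (E : list G).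
Local Notation wl := (word_length G mul one E).

Definition agree_on_ball (k : nat) (x y : G -> A) : Prop :=
  forall g, (wl g <= k)%nat -> x g = y g.

Lemma cantor_dist_neq (x y : G -> A) :
  x <> y ->
  exists k, cantor_dist G mul one A E x y = (/ 2) ^ k /\
    (exists g, x g <> y g /\ wl g = k) /\ forall g, x g <> y g -> (k <= wl g)%nat.
Proof.
  intros Hxy. unfold cantor_dist.
  destruct (excluded_middle_informative (x = y)) as [Heq | _]; [contradiction |].
  set (P := fun k => (exists g, x g <> y g /\ wl g = k) /\
                     forall g, x g <> y g -> (k <= wl g)%nat).
  assert (HP : exists k, P k).
  { destruct (not_all_ex_not _ _ (fun H => Hxy (functional_extensionality x y H)))
      as [g0 Hg0].
    destruct (classical_least_nat (fun k => exists g, x g <> y g /\ wl g = k) (wl g0))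
      as (m & Hm & Hmin); [eauto |].
    exists m. split; [exact Hm |]. intros g Hg. apply Hmin. eauto. }
  exists (epsilon (inhabits 0%nat) P). split; [reflexivity | exact (epsilon_spec _ P HP)].
Qed.

Lemma cantor_ball_agree (k : nat) (x y : G -> A) :
  cantor_ball G mul one A E x ((/ 2) ^ S k) y <-> agree_on_ball k x y.
Proof.
  unfold cantor_ball. destruct (classic (x = y)) as [<- | Hxy].
  - split; [intros _ g _; reflexivity | intros _].
    unfold cantor_dist. destruct (excluded_middle_informative (x = x)); [| contradiction].
    apply pow_le; lra.
  - destruct (cantor_dist_neq x y Hxy) as (m & -> & (g0 & Hg0 & <-) & Hmin).
    split.
    + intros Hle g Hg. apply NNPP. intros Hne.
      pose proof (pow_half_lt (wl g0) (S k) ltac:(specialize (Hmin g Hne); lia)). lra.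
    + intros Hagree. apply pow_half_le.
      destruct (le_lt_dec (wl g0) k) as [Hk | Hk]; [exfalso; exact (Hg0 (Hagree g0 Hk)) | exact Hk].
Qed.

Variable Phi : (G -> A) -> G -> A.

Definition blocking (K : nat) (x : G -> A) (N : nat) : Prop :=
  forall y, agree_on_ball N x y ->
    forall t, agree_on_ball K (Nat.iter t Phi x) (Nat.iter t Phi y).

Lemma equicontinuity_point_blocking (x : G -> A) :
  (forall K, exists N, blocking K x N) -> equicontinuity_point G mul one A E Phi x.
Proof.
  intros Hx eps Heps.
  destruct (pow_half_small eps Heps) as [K HK]. destruct (Hx K) as [N HN].
  exists ((/ 2) ^ S N). split; [apply pow_lt; lra |].
  intros t y Hy. apply Rle_trans with ((/ 2) ^ S K); [| exact HK].
  apply cantor_ball_agree, HN, cantor_ball_agree, Hy.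
Qed.

Lemma not_sensitive_blocking :
  ~ sensitive G mul one A E Phi -> forall K, exists x N, blocking K x N.
Proof.
  intros Hns K. apply NNPP. intros Hno. apply Hns.
  exists ((/ 2) ^ S K). split; [apply pow_lt; lra |].
  intros x delta Hdelta. destruct (pow_half_small delta Hdelta) as [N HN].
  apply NNPP. intros Hstable. apply Hno. exists x, N. intros y Hy t.
  apply cantor_ball_agree, NNPP. intros Hfar. apply Hstable.
  exists t, y. split; [| exact Hfar].
  apply Rle_trans with ((/ 2) ^ S N); [apply cantor_ball_agree, Hy | exact HN].
Qed.

Lemma equicontinuity_point_not_sensitive (x : G -> A) :
  equicontinuity_point G mul one A E Phi x -> ~ sensitive G mul one A E Phi.
Proof.
  intros Hx (eps & Heps & Hsens).
  destruct (Hx eps Heps) as (delta & Hdelta & Hstable).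
  destruct (Hsens x delta Hdelta) as (t & y & Hy & Hfar).
  exact (Hfar (Hstable t y Hy)).
Qed.

End CantorMetric.

Section CellularAutomaton.
Variables (G : Type) (mul : G -> G -> G) (one : G) (A : Type) (E : list G).
Hypothesis mulgA : forall a b c, mul a (mul b c) = mul (mul a b) c.
Variables (memory : list G) (mu : ({s : G | In s memory} -> A) -> A).
Variable Phi : (G -> A) -> G -> A.
Hypothesis Phi_local : forall x g, Phi x g = mu (fun s => x (mul g (proj1_sig s))).
Local Notation wl := (word_length G mul one E).

Definition shift (c : G) (x : G -> A) : G -> A := fun h => x (mul c h).

Lemma iter_shift (t : nat) (c : G) (x : G -> A) :
  Nat.iter t Phi (shift c x) = shift c (Nat.iter t Phi x).
Proof.
  induction t as [|t IH]; [reflexivity |]. simpl. rewrite IH.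
  apply functional_extensionality. intros h. unfold shift. rewrite !Phi_local.
  f_equal. apply functional_extensionality. intros s. rewrite mulgA. reflexivity.
Qed.

Lemma iter_succ_agree (t : nat) (x y : G -> A) (g : G) :
  (forall s, In s memory -> Nat.iter t Phi x (mul g s) = Nat.iter t Phi y (mul g s)) ->
  Nat.iter (S t) Phi x g = Nat.iter (S t) Phi y g.
Proof.
  intros Hnbhd. simpl. rewrite !Phi_local. f_equal.
  apply functional_extensionality. intros [s Hs]. exact (Hnbhd s Hs).
Qed.

Lemma blocking_shift (K n : nat) (x0 : G -> A) (c : G) (x y : G -> A) :
  blocking G mul one A E Phi K x0 n ->
  agree_on_ball G mul one A E n x0 (shift c x) ->
  agree_on_ball G mul one A E n x0 (shift c y) ->
  forall t, agree_on_ball G mul one A E K (shift c (Nat.iter t Phi x)) (shift c (Nat.iter t Phi y)).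
Proof.
  intros Hx0 Hx Hy t h Hh. rewrite <- !iter_shift.
  transitivity (Nat.iter t Phi x0 h); [symmetry |].
  - exact (Hx0 _ Hx t h Hh).
  - exact (Hx0 _ Hy t h Hh).
Qed.

Section Periodization.
Variables (phi : Z -> G) (L : G -> Z) (D : Z).
Hypothesis phi_opp_cancel : forall p g, mul (phi (- p)%Z) (mul (phi p) g) = g.
Hypothesis L_shift : forall p g, L (mul (phi p) g) = (p + L g)%Z.
Hypothesis D_nonneg : (0 <= D)%Z.
Hypothesis L_memory : forall g s, In s memory -> (Z.abs (L (mul g s) - L g) <= D)%Z.
Hypothesis L_word : forall g, (Z.abs (L g - L one) <= D * Z.of_nat (wl g))%Z.
Hypothesis L_proper : forall B, exists N, forall g, (Z.abs (L g) <= B)%Z -> (wl g <= N)%nat.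

Lemma phi_cancel_opp (p : Z) (g : G) : mul (phi p) (mul (phi (- p)) g) = g.
Proof. rewrite <- (Z.opp_involutive p) at 1. apply phi_opp_cancel. Qed.

Lemma L_ball (k : nat) (g : G) :
  (wl g <= k)%nat -> (Z.abs (L g) <= D * Z.of_nat k + Z.abs (L one))%Z.
Proof. intros Hk. pose proof (L_word g). apply Nat2Z.inj_le in Hk. nia. Qed.

(* [(L g + c) / (2c+1)] is the index [j] of the block of heights
   [j(2c+1) - c, j(2c+1) + c] containing [g]; the configuration at [g] copies [x]
   at the corresponding point of the central block. *)
Definition periodize (c : Z) (x : G -> A) : G -> A :=
  fun g => x (mul (phi (- ((2 * c + 1) * ((L g + c) / (2 * c + 1))))%Z) g).

Lemma periodize_translate (c : Z) (x : G -> A) (j : Z) (h : G) :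
  (Z.abs (L h) <= c)%Z -> periodize c x (mul (phi (j * (2 * c + 1))%Z) h) = x h.
Proof.
  intros Hh. unfold periodize. rewrite L_shift.
  replace ((j * (2 * c + 1) + L h + c) / (2 * c + 1))%Z with j.
  - rewrite Z.mul_comm, phi_opp_cancel. reflexivity.
  - apply Z.div_unique_pos with (L h + c)%Z; lia.
Qed.

Lemma iter_agree_between_walls (M : Z) (x y : G -> A) :
  (forall g, (Z.abs (L g) <= M)%Z -> x g = y g) ->
  (forall t g, (M - D < Z.abs (L g) <= M)%Z -> Nat.iter t Phi x g = Nat.iter t Phi y g) ->
  forall t g, (Z.abs (L g) <= M)%Z -> Nat.iter t Phi x g = Nat.iter t Phi y g.
Proof.
  intros Hinit Hwalls t. induction t as [|t IH]; intros g Hg; [exact (Hinit g Hg) |].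
  destruct (Z_le_gt_dec (Z.abs (L g)) (M - D)) as [Hinside | Hwall]; [| apply Hwalls; lia].
  apply iter_succ_agree. intros s Hs. apply IH. pose proof (L_memory g s Hs). lia.
Qed.

Section BlockingPattern.
Variables (x0 : G -> A) (n0 K0 : nat).
Hypothesis x0_blocking : blocking G mul one A E Phi K0 x0 n0.
Hypothesis K0_slab : forall h, (Z.abs (L h) <= D)%Z -> (wl h <= K0)%nat.

Let c := (D * Z.of_nat n0 + Z.abs (L one))%Z.
Let T := (2 * c + 1)%Z.

Lemma periodize_blocks (j : Z) (h : G) :
  (wl h <= n0)%nat -> periodize c x0 (mul (phi (j * T)) h) = x0 h.
Proof. intros Hh. apply periodize_translate, L_ball, Hh. Qed.

Lemma walls_agree (M : Z) (y : G -> A) :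
  (forall g, (Z.abs (L g) <= M + c)%Z -> periodize c x0 g = y g) ->
  forall j t g, (Z.abs (j * T) <= M)%Z -> (Z.abs (L g - j * T) <= D)%Z ->
    Nat.iter t Phi (periodize c x0) g = Nat.iter t Phi y g.
Proof.
  intros Hy j t g Hj Hg.
  set (h := mul (phi (- (j * T))) g).
  assert (Hslab : (wl h <= K0)%nat) by (apply K0_slab; unfold h; rewrite L_shift; lia).
  rewrite <- (phi_cancel_opp (j * T) g). fold h.
  apply (blocking_shift K0 n0 x0 (phi (j * T)) _ _ x0_blocking); [| | exact Hslab].
  - intros h' Hh'. symmetry. apply periodize_blocks, Hh'.
  - intros h' Hh'. unfold shift. rewrite <- Hy.
    + symmetry. apply periodize_blocks, Hh'.
    + rewrite L_shift. pose proof (L_ball n0 h' Hh') as Hh'c. fold c in Hh'c. lia.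
Qed.

Lemma periodize_equicontinuity_point :
  equicontinuity_point G mul one A E Phi (periodize c x0).
Proof.
  assert (Hc : (0 <= c)%Z) by (unfold c; nia).
  apply equicontinuity_point_blocking. intros K.
  set (j := (D * Z.of_nat K + Z.abs (L one) + 1)%Z).
  remember (j * T)%Z as M eqn:HM.
  assert (Hj : (j <= M)%Z) by (subst M; unfold T, j; nia).
  destruct (L_proper (M + c)) as [N HN].
  exists N. intros y Hy t g Hg.
  assert (Hagree : forall g, (Z.abs (L g) <= M + c)%Z -> periodize c x0 g = y g)
    by (intros g' Hg'; apply Hy, HN, Hg').
  apply (iter_agree_between_walls M).
  - intros g' Hg'. apply Hagree. lia.
  - intros t' g' Hg'. destruct (Z_le_gt_dec 0 (L g')).
    + apply (walls_agree M y Hagree j); lia.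
    + apply (walls_agree M y Hagree (- j)); lia.
  - pose proof (L_ball K g Hg). unfold j in Hj. lia.
Qed.

End BlockingPattern.
End Periodization.
End CellularAutomaton.

Theorem theorem1 (G : Type) (mul : G -> G -> G) (one : G) (inv : G -> G)
  (HG : is_group G mul one inv)
  (E : list G) (HE : gen_set_closed_inv G mul one inv E)
  (HvZ : virtually_Z G mul one inv)
  (A : Type) (HA : finite_type A)
  (Phi : (G -> A) -> (G -> A)) (HPhi : is_CA G mul A Phi) :
  sensitive G mul one A E Phi <->
  ~ (exists x : G -> A, equicontinuity_point G mul one A E Phi x).
Proof.
  split.
  - intros Hsens [x Hx]. exact (equicontinuity_point_not_sensitive _ _ _ _ _ _ x Hx Hsens).
  - intros Hno. apply NNPP. intros Hns. apply Hno.
    destruct HPhi as (memory & mu & Phi_local).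
    destruct (virtually_Z_height G mul one inv HG E HE HvZ)
      as (phi & L & phi_opp_cancel & L_shift & L_lipschitz & L_proper).
    destruct (L_lipschitz (memory ++ E)) as (D & D_nonneg & HD).
    destruct (L_proper D) as [K0 K0_slab].
    destruct (not_sensitive_blocking _ _ _ _ _ _ Hns K0) as (x0 & n0 & x0_blocking).
    assert (L_memory : forall g s, In s memory -> (Z.abs (L (mul g s) - L g) <= D)%Z)
      by (intros g s Hs; apply HD, in_or_app; left; exact Hs).
    assert (L_word := word_lipschitz G mul one inv HG E HE L D
                        (fun g s Hs => HD g s (in_or_app _ _ _ (or_intror Hs)))).
    eexists.
    exact (periodize_equicontinuity_point G mul one A E (proj1 HG) memory mu Phi Phi_local
             phi L D phi_opp_cancel L_shift D_nonneg L_memory L_word L_proper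
             x0 n0 K0 x0_blocking K0_slab).
Qed.
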